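(* Let $\alpha>0$, $x\in\mathbb{R}^+$ and $r>0$. Let $B_\delta(x,r)=\{y\in\mathbb{R}^+:\delta(x,y)<r\}$. All integrals below are in $y$, with integrand a function of $\delta(x,y)$. (a) $B_\delta(x,r)$ is the largest dyadic interval in $\mathcal{D}$ that contains $x$ and has measure less than $r$. Denote it by $I(x,r)$. (b) $\displaystyle\int_{B_\delta(x,r)}\frac{dy}{\delta(x,y)^{1-\alpha}}=\frac{1}{2(1-2^{-\alpha})}|I(x,r)|^{\alpha}$. This quantity is comparable to $r^\alpha$, with constants depending only on $\alpha$. (c) $\displaystyle\int_{B_\delta(x,r)}\frac{dy}{\delta(x,y)^{1+\alpha}}=+\infty$. (d) $\displaystyle\int_{\mathbb{R}^+\setminus B_\delta(x,r)}\frac{dy}{\delta(x,y)^{1+\alpha}}=\frac{2^{-\alpha}}{2(1-2^{-\alpha})}|I(x,r)|^{-\alpha}$. This quantity is comparable to $r^{-\alpha}$, with constants depending only on $\alpha$. (e) $\displaystyle\int_{\mathbb{R}^+\setminus B_\delta(x,r)}\frac{dy}{\delta(x,y)^{1-\alpha}}=+\infty$. (f) $\displaystyle\int_{B_\delta(x,r)}\frac{dy}{\delta(x,y)}=\int_{\mathbb{R}^+\setminus B_\delta(x,r)}\frac{dy}{\delta(x,y)}=+\infty$.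
   Context: Let $\mathbb{R}^+=(0,\infty)$. $\mathcal{D}$ is the family of dyadic intervals in $\mathbb{R}^+$, namely the intervals $I^j_k=(k2^{-j},(k+1)2^{-j}]$ with $j\in\mathbb{Z}$ and $k$ a nonnegative integer. The dyadic distance on $\mathbb{R}^+$ is $\delta(x,y)=\inf\{|I|: I\in\mathcal{D},\ x,y\in I\}$. It is a metric and satisfies $|x-y|\le\delta(x,y)$. *)

From HB Require Import structures.
From mathcomp Require Import all_boot all_order all_algebra.
From mathcomp Require Import all_classical all_reals all_analysis.
Set Implicit Arguments. Unset Strict Implicit. Unset Printing Implicit Defensive.
Import Order.TTheory GRing.Theory Num.Theory.
Local Open Scope classical_set_scope.
Local Open Scope ring_scope.

Section Dyadic.
Variable R : realType.

Definition Rpos : set R := `]0, +oo[.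

Definition dyadic (j : int) (k : nat) : set R :=
  `] k%:R * (2:R) ^ (- j), k.+1%:R * (2:R) ^ (- j)].

Definition dyadicD : set (set R) := [set I | exists (j : int) (k : nat), I = dyadic j k].

Definition msr (A : set R) : R := fine (@lebesgue_measure R A).

Definition ddist (x y : R) : R :=
  inf [set msr I | I in [set I | dyadicD I /\ I x /\ I y]].

Definition dball (x r : R) : set R := [set y | Rpos y /\ ddist x y < r].

End Dyadic.
Arguments Rpos {R}.

From HB Require Import structures.
From mathcomp Require Import all_boot all_order all_algebra.
From mathcomp Require Import all_classical all_reals all_analysis.
From mathcomp Require Import ring lra measurable_realfun.
Set Implicit Arguments. Unset Strict Implicit. Unset Printing Implicit Defensive.
Import Order.TTheory GRing.Theory Num.Theory.
Local Open Scope classical_set_scope.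
Local Open Scope ring_scope.

(* For x > 0 the dyadic intervals containing x form a nested chain D_j(x), j : int,
   with |D_j(x)| = 2^-j, and delta(x, .) equals 2^-j exactly on the shell
   D_j(x) \ D_(j+1)(x), which has measure 2^-j / 2.  The ball B_delta(x, r) is D_j0(x)
   for the unique j0 with 2^-j0 < r <= 2^(1-j0); hence B_delta(x, r) \ {x} is the
   disjoint union of the shells j >= j0 and R^+ \ B_delta(x, r) that of the shells
   j < j0.  An integral of delta(x, .)^-s over either region is therefore a geometric
   series, with ratio 2^(s-1) inside the ball and 2^(1-s) outside it, and it is finite
   exactly when that ratio is below 1. *)

Lemma exists_exit (P : nat -> Prop) n : P 0%N -> ~ P n -> exists m, P m /\ ~ P m.+1.
Proof.
elim: n => [//|n IH] P0 nPn.
by case: (pselect (P n)) => [Pn|nPn']; [exists n | exact: IH].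
Qed.

Lemma exists_expr2_gt {R : archiRealDomainType} (t : R) : exists n : nat, t < 2 ^+ n.
Proof.
exists (Num.truncn t).+1; apply: (lt_le_trans (truncnS_gt t)).
by rewrite -natrX ler_nat ltnW // ltn_expl.
Qed.

Lemma ceil_divr_nat_ceil {R : archiRealFieldType} (a : R) (m : nat) : (0 < m)%N ->
  Num.ceil (a / m%:R) = Num.ceil (((Num.ceil a)%:~R : R) / m%:R).
Proof.
move=> m_gt0; have mR : 0 < m%:R :> R by rewrite ltr0n.
apply/le_anti/andP; split.
  by apply: le_ceil; rewrite ler_pM2r ?invr_gt0 // ceil_ge.
rewrite ceil_le_int ler_pdivrMr // mulrC.
set c := Num.ceil (a / m%:R).
have -> : m%:R * c%:~R = (m%:Z * c)%:~R :> R by rewrite intrM -pmulrn.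
by rewrite ler_int ceil_le_int intrM -pmulrn -ler_pdivrMl // mulrC ceil_ge.
Qed.

Lemma eseries_geometric {R : realType} (a q : R) : 0 <= q < 1 ->
  (\sum_(m <oo) (a * q ^+ m)%:E = (a / (1 - q))%:E)%E.
Proof.
move=> /andP[q_ge0 q_lt1]; apply: cvg_lim => //.
apply: cvg_EFin; first by apply: nearW => n; rewrite /eseries /= sumEFin.
rewrite [X in X @ _ --> _](_ : _ = series (geometric a q)); last first.
  by apply/funext => n; rewrite /= /eseries /= sumEFin.
by apply: cvg_geometric_series; rewrite ger0_norm.
Qed.

Lemma eseries_geometric_pinfty {R : realType} (a q : R) : 0 < a -> 1 <= q ->
  (\sum_(m <oo) (a * q ^+ m)%:E = +oo)%E.
Proof.
move=> a_gt0 q_ge1; apply/eqyP => A _.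
have [n lt_n] : exists n : nat, A / a < n%:R.
  by exists (Num.truncn (A / a)).+1; exact: truncnS_gt.
apply: le_trans (nneseries_lim_ge n _); last first.
  by move=> k _ _; rewrite lee_fin mulr_ge0 ?exprn_ge0 ?(ltW a_gt0) ?(le_trans ler01 q_ge1).
rewrite ltr_pdivrMr // in lt_n; rewrite sumEFin lee_fin (le_trans (ltW lt_n)) //.
rewrite mulr_natl -[n in a *+ n]subn0 -sumr_const_nat; apply: ler_sum => i _.
by rewrite ler_peMr ?(ltW a_gt0) // exprn_ege1.
Qed.

Lemma mul_invpowR {R : realType} (t s : R) : 0 < t -> (t `^ s)^-1 * t = t `^ (1 - s).
Proof.
move=> t_gt0; rewrite powRB; last by rewrite implybE (gt_eqF t_gt0) orbT.
by rewrite powRr1 ?(ltW t_gt0) // mulrC.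
Qed.

Lemma powR_half {R : realType} (r a : R) : 0 <= r -> (r / 2) `^ a = 2 `^ (- a) * r `^ a.
Proof. by move=> r_ge0; rewrite powRM // -powR_inv1 // -powRrM mulN1r mulrC. Qed.

Lemma powR2_gt1 {R : realType} (a : R) : 0 < a -> 1 < 2 `^ a.
Proof. by move=> a_gt0; rewrite /powR pnatr_eq0 /= expR_gt1 mulr_gt0 // ln_gt0 // ltr1n. Qed.

Lemma powR2N_lt1 {R : realType} (a : R) : 0 < a -> 2 `^ (- a) < 1.
Proof. by move=> a_gt0; rewrite powRN invf_lt1 ?powR_gt0 // powR2_gt1. Qed.

Lemma powR2_ge1 {R : realType} (a : R) : 0 <= a -> 1 <= 2 `^ a.
Proof. by move=> a_ge0; rewrite -[leLHS](powRr0 2) ler_powR ?ler1n. Qed.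

Section DyadicCells.
Context {R : realType}.

Definition dyadic_len (j : int) : R := 2 ^ (- j).

Local Notation len := dyadic_len.

Lemma dyadic_len_gt0 j : 0 < len j.
Proof. exact: exprz_gt0. Qed.

Lemma ltr_dyadic_len j j' : (len j < len j') = (j' < j).
Proof. by rewrite /len ltr_eXz2l ?ltr1n // ltrN2. Qed.

Lemma ler_dyadic_len j j' : (len j <= len j') = (j' <= j).
Proof. by rewrite /len ler_eXz2l ?ltr1n // lerN2. Qed.

Lemma dyadic_lenD j (n : nat) : len j = len (j + n) * 2 ^+ n.
Proof.
have -> : (2 : R) ^+ n = 2 ^ n%:Z by [].
by rewrite /len -expfzDr ?pnatr_eq0 // opprD addrNK.
Qed.

Lemma dyadic_lenS j : len j = 2 * len (j + 1).
Proof. by rewrite (dyadic_lenD j 1) mulrC expr1. Qed.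

Lemma dyadic_len_shift_powR j (n : int) u :
  len (j + n) `^ u = len j `^ u * 2 `^ (- (n%:~R * u)).
Proof.
rewrite /dyadic_len -!powR_intmul // -!powRrM -powRD ?pnatr_eq0 ?implybT //.
by congr (_ `^ _); rewrite !mulrNz intrD; ring.
Qed.

Lemma dyadic_scale r : 0 < r -> exists j, len j < r <= len (j - 1).
Proof.
move=> r_gt0; have [N ltN] := exists_expr2_gt (Num.max r r^-1).
have [m [le_r lt_r]] : exists m : nat,
    r <= len (m%:Z - N%:Z) /\ ~ r <= len (m.+1%:Z - N%:Z).
  apply: (@exists_exit _ (N + N)%N).
    by rewrite sub0r /len opprK ltW // (le_lt_trans _ ltN) // le_max lexx.
  rewrite PoszD addrK /len -exprnN -[r]invrK; apply/negP; rewrite -ltNge.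
  by rewrite ltf_pV2 ?posrE ?invr_gt0 ?exprn_gt0 // (le_lt_trans _ ltN) // le_max lexx orbT.
exists (m.+1%:Z - N%:Z); rewrite ltNge; apply/andP; split; first exact/negP.
by rewrite -[m.+1]addn1 PoszD addrAC addrK.
Qed.

Lemma dyadic_scale_min j j' r : len j' < r -> r <= len (j - 1) -> j <= j'.
Proof.
move=> lt_j' le_r.
by rewrite -ltzD1 -ltrBlDr -ltr_dyadic_len (lt_le_trans lt_j' le_r).
Qed.

(* [I^j_k] is the set of [y] with [ceil (y 2^j) = k + 1], so for [x > 0] this is the
   level-[j] dyadic interval containing [x]. *)
Definition dyadic_cell (j : int) (x : R) : set R :=
  [set y | Num.ceil (y / len j) = Num.ceil (x / len j)].

Definition dyadic_index (j : int) (x : R) : nat := `|Num.ceil (x / len j) - 1|%N.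

Lemma mem_dyadic j k y : dyadic j k y <-> Num.ceil (y / len j) = k.+1%:Z.
Proof.
have len_gt0 := dyadic_len_gt0 j.
have k1 : k.+1%:Z - 1 = k by rewrite -addn1 PoszD addrK.
rewrite /dyadic /= in_itv /=; split.
  move=> /andP[lo hi]; apply: ceil_def.
  by rewrite k1 ltr_pdivlMr // ler_pdivrMr // -!pmulrn lo.
move=> ceil_y; have := ceil_ge (y / len j); have := ceilB1_lt (y / len j).
by rewrite ceil_y k1 ltr_pdivlMr // ler_pdivrMr // -!pmulrn => -> ->.
Qed.

Lemma dyadic_cellE j x : 0 < x -> dyadic_cell j x = dyadic j (dyadic_index j x).
Proof.
move=> x_gt0; have : 0 < Num.ceil (x / len j).
  by rewrite ceil_gt0 divr_gt0 ?dyadic_len_gt0.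
rewrite gtz0_ge1 -subr_ge0 => /gez0_abs ceilE.
apply/seteqP; split => y; rewrite mem_dyadic /dyadic_index -addn1 PoszD ceilE subrK //.
Qed.

Lemma dyadic_eq_cell j k x : dyadic j k x -> dyadic j k = dyadic_cell j x.
Proof.
move/mem_dyadic => ceil_x; apply/seteqP; split => y.
  by move/mem_dyadic => ceil_y; rewrite /dyadic_cell /= ceil_x ceil_y.
by rewrite /dyadic_cell /= ceil_x => /mem_dyadic.
Qed.

Lemma mem_dyadic_cell j x : dyadic_cell j x x.
Proof. by []. Qed.

Lemma dyadic_cell_le j j' x : j <= j' -> dyadic_cell j' x `<=` dyadic_cell j x.
Proof.
rewrite -subr_ge0 => /gez0_abs; set n := `|j' - j|%N => jj'.
have -> : j' = j + n by rewrite jj' addrC subrK.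
move=> y; rewrite /dyadic_cell /= => ceil_y.
rewrite (dyadic_lenD j n) !invfM !mulrA -!natrX.
rewrite [LHS]ceil_divr_nat_ceil ?expn_gt0 // [RHS]ceil_divr_nat_ceil ?expn_gt0 //.
by rewrite ceil_y.
Qed.

Lemma dyadic_cell_gt0 j x y : 0 < x -> dyadic_cell j x y -> 0 < y.
Proof.
move=> x_gt0 ceil_y.
have : 0 < Num.ceil (y / len j) by rewrite ceil_y ceil_gt0 divr_gt0 ?dyadic_len_gt0.
by rewrite ceil_gt0 pmulr_lgt0 // invr_gt0 dyadic_len_gt0.
Qed.

Lemma dyadic_cell_dist j x y : 0 < x -> dyadic_cell j x y -> `|y - x| < len j.
Proof.
move=> x_gt0; rewrite dyadic_cellE // => y_in.
have : dyadic j (dyadic_index j x) x by rewrite -dyadic_cellE.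
move: y_in; rewrite /dyadic /= !in_itv /= -/(len j) -[_.+1]addn1 natrD mulrDl mul1r.
by move=> /andP[? ?] /andP[? ?]; rewrite ltr_norml; apply/andP; split; lra.
Qed.

Lemma dyadic_cell_coarse j x y : 0 < x -> 0 < y -> x <= len j -> y <= len j ->
  dyadic_cell j x y.
Proof.
move=> x_gt0 y_gt0 x_le y_le; have len_gt0 := dyadic_len_gt0 j.
by rewrite /dyadic_cell /= !(@ceil_def _ _ 1) // subrr ?divr_gt0 // ler_pdivrMr // mul1r.
Qed.

End DyadicCells.

Section DyadicDistance.
Context {R : realType}.
Implicit Types (x y : R).
Local Notation len := (@dyadic_len R).
Local Notation mu := (@lebesgue_measure R).

Lemma lebesgue_dyadic j k : mu (dyadic j k) = (len j)%:E.
Proof.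
have len_gt0 : 0 < len j := dyadic_len_gt0 j.
rewrite lebesgue_measure_itv /= lte_fin -/(len j) ltr_pM2r // ltr_nat ltnSn -EFinD.
by rewrite -[k.+1]addn1 natrD mulrDl mul1r addrAC subrr add0r.
Qed.

Lemma msr_dyadic j k : msr (@dyadic R j k) = len j.
Proof. by rewrite /msr lebesgue_dyadic. Qed.

Lemma dyadicD_cell j x : 0 < x -> dyadicD (dyadic_cell j x).
Proof. by move=> x_gt0; exists j, (dyadic_index j x); rewrite dyadic_cellE. Qed.

Lemma measurable_dyadic_cell j x : 0 < x -> measurable (dyadic_cell j x).
Proof. by move=> x_gt0; rewrite dyadic_cellE //; exact: measurable_itv. Qed.

Lemma lebesgue_dyadic_cell j x : 0 < x -> mu (dyadic_cell j x) = (len j)%:E.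
Proof. by move=> x_gt0; rewrite dyadic_cellE // lebesgue_dyadic. Qed.

Lemma msr_dyadic_cell j x : 0 < x -> msr (dyadic_cell j x) = len j.
Proof. by move=> x_gt0; rewrite dyadic_cellE // msr_dyadic. Qed.

Lemma ddistE x y : 0 < x ->
  ddist x y = inf [set len j | j in [set j | dyadic_cell j x y]].
Proof.
move=> x_gt0; rewrite /ddist; congr inf; apply/seteqP; split.
  move=> _ [I [[j [k ->]] [Ix Iy]] <-]; exists j; last by rewrite msr_dyadic.
  by move: Iy; rewrite (dyadic_eq_cell Ix).
move=> _ [j y_in <-]; exists (dyadic_cell j x); last by rewrite dyadic_cellE // msr_dyadic.
by split; [exact: dyadicD_cell | split; first exact: mem_dyadic_cell].
Qed.

Lemma ddist_ge0 x y : 0 <= ddist x y.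
Proof.
rewrite /ddist; set S := [set msr I | I in _].
have [->|/set0P S_neq0] := eqVneq S set0; first by rewrite inf0.
by apply: lb_le_inf S_neq0 _ => _ [I _ <-]; rewrite fine_ge0 ?measure_ge0.
Qed.

Lemma ddist_le_len j x y : 0 < x -> dyadic_cell j x y -> ddist x y <= len j.
Proof.
move=> x_gt0 y_in; rewrite ddistE //; apply: ge_inf; last by exists j.
by exists 0 => _ [j' _ <-]; exact/ltW/dyadic_len_gt0.
Qed.

Lemma exists_dyadic_cell j x y : 0 < x -> 0 < y ->
  exists n : nat, dyadic_cell (j - n%:Z) x y.
Proof.
move=> x_gt0 y_gt0; have : 0 < Num.max x y by rewrite lt_max x_gt0.
move=> /dyadic_scale[j' /andP[_ le_j']].
have y_in : dyadic_cell (j' - 1) x y.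
  by apply: dyadic_cell_coarse => //; apply: le_trans le_j'; rewrite le_max lexx ?orbT.
exists (absz (j - (j' - 1))%R); apply: (dyadic_cell_le _ y_in).
by rewrite abszE lerBlDr -lerBlDl ler_norm.
Qed.

Lemma exists_not_dyadic_cell j x y : 0 < x -> y != x ->
  exists n : nat, ~ dyadic_cell (j + n%:Z) x y.
Proof.
rewrite -subr_eq0 -normr_gt0 => x_gt0 /dyadic_scale[j' /andP[lt_j' _]].
exists (absz (j' - j)%R) => /(dyadic_cell_dist x_gt0); apply/negP; rewrite -leNgt.
apply: le_trans (ltW lt_j'); rewrite ler_dyadic_len.
by rewrite abszE -lerBlDl ler_norm.
Qed.

Definition dyadic_shell (j : int) (x : R) : set R :=
  dyadic_cell j x `\` dyadic_cell (j + 1) x.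

Lemma measurable_dyadic_shell j x : 0 < x -> measurable (dyadic_shell j x).
Proof. by move=> x_gt0; apply: measurableD; exact: measurable_dyadic_cell. Qed.

Lemma lebesgue_dyadic_shell j x : 0 < x -> mu (dyadic_shell j x) = (len j / 2)%:E.
Proof.
move=> x_gt0; have cell_fin : (mu (dyadic_cell j x) < +oo)%E.
  by rewrite lebesgue_dyadic_cell ?ltry.
have mcell j' : measurable (dyadic_cell j' x) := measurable_dyadic_cell j' x_gt0.
rewrite measureD //; [|exact: mcell..].
rewrite setIidr; last by apply: dyadic_cell_le; rewrite lerDl.
change (mu (dyadic_cell j x) - mu (dyadic_cell (j + 1) x) = (len j / 2)%:E)%E.
rewrite !lebesgue_dyadic_cell // -EFinB (dyadic_lenS j).
by congr (_%:E); lra.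
Qed.

Lemma dyadic_shell_inj j j' x y :
  dyadic_shell j x y -> dyadic_shell j' x y -> j = j'.
Proof.
wlog le_jj' : j j' / j <= j'.
  move=> wlog_le y_j y_j'; case: (lerP j j') => [le_jj'|/ltW le_j'j].
    exact: wlog_le.
  exact/esym/wlog_le.
move=> [_ y_out] [y_in' _]; rewrite le_eqVlt in le_jj'.
case/predU1P: le_jj' => // lt_jj'.
by exfalso; apply: y_out; apply: (dyadic_cell_le _ y_in'); rewrite lezD1.
Qed.

Lemma ddist_dyadic_shell j x y : 0 < x -> dyadic_shell j x y -> ddist x y = len j.
Proof.
move=> x_gt0 [y_in y_out]; apply/le_anti; rewrite ddist_le_len //=.
rewrite ddistE //; apply: lb_le_inf; first by exists (len j), j.
move=> _ [j' y_in' <-]; rewrite ler_dyadic_len leNgt; apply/negP => lt_jj'.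
by apply: y_out; apply: (dyadic_cell_le _ y_in'); rewrite lezD1.
Qed.

End DyadicDistance.

Section DyadicBall.
Context {R : realType}.
Implicit Types (x y r : R).
Local Notation len := (@dyadic_len R).

Lemma in_Rpos y : Rpos y <-> 0 < y.
Proof. by rewrite /Rpos /= in_itv /= andbT. Qed.

Lemma dball_dyadic_cell j x r : 0 < x -> len j < r -> r <= len (j - 1) ->
  dball x r = dyadic_cell j x.
Proof.
move=> x_gt0 lt_r le_r; apply/seteqP; split => y.
  move=> [/in_Rpos y_gt0]; rewrite ddistE // => lt_d.
  have [n y_in] := exists_dyadic_cell 0 x_gt0 y_gt0.
  have [_ [j' y_in' <-] lt_j'] := inf_lt (ex_intro _ _ (imageP len y_in)) lt_d.
  exact: (dyadic_cell_le (dyadic_scale_min lt_j' le_r) y_in').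
move=> y_in; split; first exact/in_Rpos/(dyadic_cell_gt0 x_gt0 y_in).
exact: le_lt_trans (ddist_le_len x_gt0 y_in) lt_r.
Qed.

Lemma dyadic_cell_setD1 j x : 0 < x ->
  dyadic_cell j x `\ x = \bigcup_m dyadic_shell (j + m%:Z) x.
Proof.
move=> x_gt0; apply/seteqP; split => y.
  move=> [y_in y_neq]; have /(exists_not_dyadic_cell j x_gt0)[n y_out] : y != x.
    exact/eqP.
  have [m [y_m y_m1]] : exists m : nat,
      dyadic_cell (j + m%:Z) x y /\ ~ dyadic_cell (j + m.+1%:Z) x y.
    by apply: (@exists_exit (fun m => dyadic_cell (j + m%:Z) x y) n); rewrite ?addr0.
  by exists m => //; split; rewrite // -addn1 PoszD addrA in y_m1.
move=> [m _ [y_in y_out]]; split.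
  by apply: (dyadic_cell_le _ y_in); rewrite lerDl.
by move=> /= y_eq; apply: y_out; rewrite y_eq; exact: mem_dyadic_cell.
Qed.

Lemma Rpos_setD_dyadic_cell j x : 0 < x ->
  Rpos `\` dyadic_cell j x = \bigcup_m dyadic_shell (j - m.+1%:Z) x.
Proof.
have shiftE (m : nat) : j - m.+1%:Z + 1 = j - m%:Z.
  by rewrite -addn1 PoszD opprD addrA subrK.
move=> x_gt0; apply/seteqP; split => y.
  move=> [/in_Rpos y_gt0 y_out]; have [n y_in] := exists_dyadic_cell j x_gt0 y_gt0.
  have [m [y_m /contrapT y_m1]] : exists m : nat,
      ~ dyadic_cell (j - m%:Z) x y /\ ~ ~ dyadic_cell (j - m.+1%:Z) x y.
    by apply: (@exists_exit (fun m => ~ dyadic_cell (j - m%:Z) x y) n); rewrite ?subr0.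
  by exists m => //; split; rewrite // shiftE.
move=> [m _ [y_in y_out]]; split; first exact/in_Rpos/(dyadic_cell_gt0 x_gt0 y_in).
by move=> y_j; apply: y_out; apply: (dyadic_cell_le _ y_j); rewrite shiftE lerBlDr lerDl.
Qed.

Lemma msr_dball_bounds x r : 0 < x -> 0 < r -> r / 2 <= msr (dball x r) < r.
Proof.
move=> x_gt0 /dyadic_scale[j /andP[lt_r le_r]].
rewrite (dball_dyadic_cell x_gt0 lt_r le_r) msr_dyadic_cell // lt_r andbT.
by rewrite (dyadic_lenS (j - 1)) subrK in le_r; lra.
Qed.

Lemma msr_dball_gt0 x r : 0 < x -> 0 < r -> 0 < msr (dball x r).
Proof.
move=> x_gt0 r_gt0; have /andP[+ _] := msr_dball_bounds x_gt0 r_gt0.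
by apply: lt_le_trans; rewrite divr_gt0.
Qed.

Lemma dball_max_dyadic x r : 0 < x -> 0 < r ->
  [/\ dyadicD (dball x r), dball x r x, msr (dball x r) < r &
      forall I, dyadicD I -> I x -> msr I < r ->
        I `<=` dball x r /\ msr I <= msr (dball x r)].
Proof.
move=> x_gt0 /dyadic_scale[j /andP[lt_r le_r]].
rewrite (dball_dyadic_cell x_gt0 lt_r le_r) msr_dyadic_cell //.
split; [exact: dyadicD_cell | exact: mem_dyadic_cell | exact: lt_r |].
move=> _ [j' [k ->]] x_in; rewrite (dyadic_eq_cell x_in) msr_dyadic_cell // => lt_j'.
have le_jj' := dyadic_scale_min lt_j' le_r.
by split; [exact: dyadic_cell_le | rewrite ler_dyadic_len].
Qed.

Lemma powR_msr_dball_bounds x r a : 0 < x -> 0 < r -> 0 <= a ->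
  2 `^ (- a) * r `^ a <= msr (dball x r) `^ a <= r `^ a.
Proof.
move=> x_gt0 r_gt0 a_ge0; have /andP[lo hi] := msr_dball_bounds x_gt0 r_gt0.
have half_ge0 : 0 <= r / 2 by rewrite divr_ge0 ?ltW.
have msr_ge0 := le_trans half_ge0 lo.
rewrite -powR_half ?(ltW r_gt0) //.
by apply/andP; split; apply: ge0_ler_powR; rewrite ?nnegrE ?(ltW r_gt0) ?(ltW hi).
Qed.

Lemma powRN_msr_dball_bounds x r a : 0 < x -> 0 < r -> 0 <= a ->
  r `^ (- a) <= msr (dball x r) `^ (- a) <= 2 `^ a * r `^ (- a).
Proof.
move=> x_gt0 r_gt0 a_ge0.
have /andP[lo hi] := powR_msr_dball_bounds x_gt0 r_gt0 a_ge0.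
have msr_gt0 := msr_dball_gt0 x_gt0 r_gt0.
rewrite !powRN; have -> : 2 `^ a * (r `^ a)^-1 = (2 `^ (- a) * r `^ a)^-1.
  by rewrite invfM powRN invrK.
by rewrite !lef_pV2 ?posrE ?mulr_gt0 ?powR_gt0 // hi lo.
Qed.

Lemma msr_dball_powR_comparable (K a : R) : 0 < K -> 0 <= a ->
  exists c1 c2 : R, 0 < c1 /\ 0 < c2 /\ forall x r, 0 < x -> 0 < r ->
    c1 * r `^ a <= K * msr (dball x r) `^ a /\ K * msr (dball x r) `^ a <= c2 * r `^ a.
Proof.
move=> K_gt0 a_ge0; exists (K * 2 `^ (- a)), K.
split; [by rewrite mulr_gt0 ?powR_gt0 | split => // x r x_gt0 r_gt0].
have /andP[lo hi] := powR_msr_dball_bounds x_gt0 r_gt0 a_ge0.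
by split; [rewrite -mulrA ler_pM2l | rewrite ler_pM2l].
Qed.

Lemma msr_dball_powRN_comparable (K a : R) : 0 < K -> 0 <= a ->
  exists c1 c2 : R, 0 < c1 /\ 0 < c2 /\ forall x r, 0 < x -> 0 < r ->
    c1 * r `^ (- a) <= K * msr (dball x r) `^ (- a) /\
    K * msr (dball x r) `^ (- a) <= c2 * r `^ (- a).
Proof.
move=> K_gt0 a_ge0; exists K, (K * 2 `^ a).
split => //; split => [|x r x_gt0 r_gt0]; first by rewrite mulr_gt0 ?powR_gt0.
have /andP[lo hi] := powRN_msr_dball_bounds x_gt0 r_gt0 a_ge0.
by split; [rewrite ler_pM2l | rewrite -mulrA ler_pM2l].
Qed.

End DyadicBall.

Section DyadicIntegrals.
Context {R : realType}.
Implicit Types (x y r : R).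
Local Notation len := (@dyadic_len R).
Local Notation mu := (@lebesgue_measure R).

Lemma measurable_fun_ddist_shells (g : R -> R) (F : nat -> int) x : 0 < x ->
  measurable_fun (\bigcup_m dyadic_shell (F m) x) (fun y => (g (ddist x y))%:E).
Proof.
move=> x_gt0; apply/measurable_fun_bigcup => m; first exact: measurable_dyadic_shell.
apply: (eq_measurable_fun (cst (g (len (F m)))%:E)); last exact: measurable_cst.
by move=> y /set_mem y_in /=; rewrite (ddist_dyadic_shell x_gt0 y_in).
Qed.

Lemma integral_ddist_shells (g : R -> R) (F : nat -> int) x : 0 < x -> injective F ->
  (forall t, 0 < t -> 0 <= g t) ->
  (\int[mu]_(y in \bigcup_m dyadic_shell (F m) x) (g (ddist x y))%:E =
   \sum_(m <oo) (g (len (F m)) * (len (F m) / 2))%:E)%E.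
Proof.
move=> x_gt0 F_inj g_ge0; rewrite ge0_integral_bigcup //.
- apply: eq_eseriesr => m _.
  rewrite (eq_integral (cst (g (len (F m)))%:E)); last first.
    by move=> y /set_mem y_in /=; rewrite (ddist_dyadic_shell x_gt0 y_in).
  rewrite integral_cst; last exact: measurable_dyadic_shell.
  change ((g (len (F m)))%:E * mu (dyadic_shell (F m) x) =
    (g (len (F m)) * (len (F m) / 2))%:E)%E.
  by rewrite lebesgue_dyadic_shell // -EFinM.
- by move=> m; exact: measurable_dyadic_shell.
- exact: measurable_fun_ddist_shells.
- move=> y [m _ y_in]; rewrite (ddist_dyadic_shell x_gt0 y_in) lee_fin.
  exact/g_ge0/dyadic_len_gt0.
- by move=> i j _ _ [y [y_i y_j]]; apply: F_inj; exact: dyadic_shell_inj y_i y_j.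
Qed.

Lemma integral_dball_ddist_powR x r s : 0 < x -> 0 < r ->
  (\int[mu]_(y in dball x r) ((ddist x y `^ s)^-1)%:E =
   \sum_(m <oo) ((2^-1 * msr (dball x r) `^ (1 - s)) * (2 `^ (s - 1)) ^+ m)%:E)%E.
Proof.
move=> x_gt0 /dyadic_scale[j /andP[lt_r le_r]].
rewrite (dball_dyadic_cell x_gt0 lt_r le_r) msr_dyadic_cell // -(integral_setD1 (r := x)).
- have shift_inj : injective (fun m : nat => j + m%:Z) by move=> m n /addrI [].
  have g_ge0 t : 0 < t -> 0 <= (t `^ s)^-1 by rewrite invr_ge0 powR_ge0.
  rewrite dyadic_cell_setD1 // (integral_ddist_shells _ shift_inj g_ge0) //.
  apply: eq_eseriesr => m _; congr (_%:E).
  rewrite mulrA mul_invpowR ?dyadic_len_gt0 // mulrC dyadic_len_shift_powR.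
  rewrite mulrA; congr (_ * _); rewrite -powR_mulrn ?powR_ge0 // -powRrM.
  by congr (_ `^ _); rewrite -pmulrn; ring.
- exact: measurableD (measurable_dyadic_cell j x_gt0) (measurable_set1 x).
- rewrite dyadic_cell_setD1 //.
  exact: (measurable_fun_ddist_shells (fun t => (t `^ s)^-1) x_gt0).
Qed.

Lemma integral_Rpos_setD_dball_ddist_powR x r s : 0 < x -> 0 < r ->
  (\int[mu]_(y in Rpos `\` dball x r) ((ddist x y `^ s)^-1)%:E =
   \sum_(m <oo) ((2^-1 * msr (dball x r) `^ (1 - s) * 2 `^ (1 - s)) *
                 (2 `^ (1 - s)) ^+ m)%:E)%E.
Proof.
move=> x_gt0 /dyadic_scale[j /andP[lt_r le_r]].
rewrite (dball_dyadic_cell x_gt0 lt_r le_r) msr_dyadic_cell // Rpos_setD_dyadic_cell //.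
have shift_inj : injective (fun m : nat => j - m.+1%:Z) by move=> m n /addrI/oppr_inj [].
have g_ge0 t : 0 < t -> 0 <= (t `^ s)^-1 by rewrite invr_ge0 powR_ge0.
rewrite (integral_ddist_shells _ shift_inj g_ge0) //.
apply: eq_eseriesr => m _; congr (_%:E).
rewrite mulrA mul_invpowR ?dyadic_len_gt0 // mulrC dyadic_len_shift_powR.
rewrite -!mulrA -exprS; congr (_ * (_ * _)); rewrite -powR_mulrn ?powR_ge0 // -powRrM.
by congr (_ `^ _); rewrite mulrNz -pmulrn; ring.
Qed.

Lemma integral_dball_ddist_powR1B x r a : 0 < x -> 0 < r -> 0 < a ->
  (\int[mu]_(y in dball x r) ((ddist x y `^ (1 - a))^-1)%:E =
   ((2 * (1 - 2 `^ (- a)))^-1 * msr (dball x r) `^ a)%:E)%E.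
Proof.
move=> x_gt0 r_gt0 a_gt0; rewrite integral_dball_ddist_powR //.
have -> : 1 - (1 - a) = a by ring.
have -> : 1 - a - 1 = - a by ring.
rewrite eseries_geometric ?powR_ge0 ?powR2N_lt1 //.
by rewrite invfM mulrAC.
Qed.

Lemma integral_dball_ddist_powR_pinfty x r s : 0 < x -> 0 < r -> 1 <= s ->
  (\int[mu]_(y in dball x r) ((ddist x y `^ s)^-1)%:E = +oo)%E.
Proof.
move=> x_gt0 r_gt0 s_ge1; rewrite integral_dball_ddist_powR //.
rewrite eseries_geometric_pinfty ?powR2_ge1 ?subr_ge0 //.
by rewrite mulr_gt0 ?invr_gt0 ?powR_gt0 ?msr_dball_gt0.
Qed.

Lemma integral_Rpos_setD_dball_ddist_powR1D x r a : 0 < x -> 0 < r -> 0 < a ->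
  (\int[mu]_(y in Rpos `\` dball x r) ((ddist x y `^ (1 + a))^-1)%:E =
   (2 `^ (- a) / (2 * (1 - 2 `^ (- a))) * msr (dball x r) `^ (- a))%:E)%E.
Proof.
move=> x_gt0 r_gt0 a_gt0; rewrite integral_Rpos_setD_dball_ddist_powR //.
have -> : 1 - (1 + a) = - a by ring.
rewrite eseries_geometric ?powR_ge0 ?powR2N_lt1 //.
by rewrite invfM; congr (_%:E); ring.
Qed.

Lemma integral_Rpos_setD_dball_ddist_powR_pinfty x r s : 0 < x -> 0 < r -> s <= 1 ->
  (\int[mu]_(y in Rpos `\` dball x r) ((ddist x y `^ s)^-1)%:E = +oo)%E.
Proof.
move=> x_gt0 r_gt0 s_le1; rewrite integral_Rpos_setD_dball_ddist_powR //.
rewrite eseries_geometric_pinfty ?powR2_ge1 ?subr_ge0 //.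
by rewrite !mulr_gt0 ?invr_gt0 ?powR_gt0 ?msr_dball_gt0.
Qed.

End DyadicIntegrals.

Theorem lemma2p2 (R : realType) (alpha : R) (alpha_gt0 : 0 < alpha) :
  (* comparability constants in (b) and (d), depending only on alpha *)
  (exists c1 c2 : R, 0 < c1 /\ 0 < c2 /\
     forall x r : R, 0 < x -> 0 < r ->
       c1 * r `^ alpha <= (2 * (1 - 2 `^ (- alpha)))^-1 * msr (dball x r) `^ alpha
       /\ (2 * (1 - 2 `^ (- alpha)))^-1 * msr (dball x r) `^ alpha <= c2 * r `^ alpha) /\
  (exists c1 c2 : R, 0 < c1 /\ 0 < c2 /\
     forall x r : R, 0 < x -> 0 < r ->
       c1 * r `^ (- alpha) <=
         2 `^ (- alpha) / (2 * (1 - 2 `^ (- alpha))) * msr (dball x r) `^ (- alpha)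
       /\ 2 `^ (- alpha) / (2 * (1 - 2 `^ (- alpha))) * msr (dball x r) `^ (- alpha)
          <= c2 * r `^ (- alpha)) /\
  (forall x r : R, 0 < x -> 0 < r ->
    (
     (* (a) *)
     [/\ dyadicD (dball x r), dball x r x, msr (dball x r) < r &
         forall I, dyadicD I -> I x -> msr I < r ->
           I `<=` dball x r /\ msr I <= msr (dball x r)]) /\
     (* (b) *)
     (\int[@lebesgue_measure R]_(y in dball x r) ((ddist x y `^ (1 - alpha))^-1)%:E
        = ((2 * (1 - 2 `^ (- alpha)))^-1 * msr (dball x r) `^ alpha)%:E)%E /\
     (* (c) *)
     (\int[@lebesgue_measure R]_(y in dball x r) ((ddist x y `^ (1 + alpha))^-1)%:E
        = +oo)%E /\
     (* (d) *)
     (\int[@lebesgue_measure R]_(y in Rpos `\` dball x r)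
          ((ddist x y `^ (1 + alpha))^-1)%:E
        = (2 `^ (- alpha) / (2 * (1 - 2 `^ (- alpha))) * msr (dball x r) `^ (- alpha))%:E)%E /\
     (* (e) *)
     (\int[@lebesgue_measure R]_(y in Rpos `\` dball x r)
          ((ddist x y `^ (1 - alpha))^-1)%:E = +oo)%E /\
     (* (f) *)
     ((\int[@lebesgue_measure R]_(y in dball x r) ((ddist x y)^-1)%:E = +oo)%E /\
     (\int[@lebesgue_measure R]_(y in Rpos `\` dball x r) ((ddist x y)^-1)%:E = +oo)%E)).
Proof.
have K_gt0 : 0 < (2 * (1 - 2 `^ (- alpha)))^-1.
  by rewrite invr_gt0 mulr_gt0 // subr_gt0 powR2N_lt1.
have alpha_ge0 := ltW alpha_gt0.
split; first exact: msr_dball_powR_comparable K_gt0 alpha_ge0.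
split; first by apply: msr_dball_powRN_comparable alpha_ge0; rewrite mulr_gt0 ?powR_gt0.
move=> x r x_gt0 r_gt0.
have powR1_ddist y : (ddist x y `^ 1)^-1 = (ddist x y)^-1 by rewrite powRr1 ?ddist_ge0.
split; first exact: dball_max_dyadic.
split; first exact: integral_dball_ddist_powR1B.
split; first by rewrite integral_dball_ddist_powR_pinfty // lerDl.
split; first exact: integral_Rpos_setD_dball_ddist_powR1D.
split; first by rewrite integral_Rpos_setD_dball_ddist_powR_pinfty // gerDl oppr_le0.
split; under eq_integral do rewrite -powR1_ddist.
- exact: integral_dball_ddist_powR_pinfty.
- exact: integral_Rpos_setD_dball_ddist_powR_pinfty.
Qed.
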